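(* Let $m,n\geq 2$. If $S$ is a $\{2\}$-resolving set of the rook's graph $K_m\Box K_n$, then every quadruple of $K_m\Box K_n$ contains at least one element of $S$.
   Context: $K_m\Box K_n$ has vertices $av$ with $a\in V(K_m)$, $v\in V(K_n)$; distinct $av,bu$ are adjacent iff $a=b$ or $u=v$. A quadruple is a set $\{av,au,bv,bu\}$ with $a\neq b$ in $V(K_m)$ and $u\neq v$ in $V(K_n)$. $d$ is the shortest-path distance, $d(s,X)=\min_{x\in X}d(s,x)$, $\mathcal{D}_S(X)=(d(s_1,X),\dots,d(s_k,X))$ for $S=\{s_1,\dots,s_k\}$. $S$ is a $\{2\}$-resolving set if $\mathcal{D}_S(X)\neq\mathcal{D}_S(Y)$ for all distinct nonempty vertex sets $X,Y$ with $|X|,|Y|\leq 2$. *)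

From mathcomp Require Import all_boot.
Set Implicit Arguments. Unset Strict Implicit. Unset Printing Implicit Defensive.

(* Rook's graph K_m □ K_n: vertex (a, v) with a : 'I_m, v : 'I_n. *)
Definition rook_adj (m n : nat) : rel ('I_m * 'I_n) :=
  fun x y => (x != y) && ((x.1 == y.1) || (x.2 == y.2)).

Fixpoint within (m n : nat) (k : nat) (x y : 'I_m * 'I_n) : bool :=
  match k with
  | 0 => x == y
  | k'.+1 => within k' x y || [exists z, within k' x z && rook_adj z y]
  end.

(* shortest-path distance: least k with a walk of length <= k
   (the graph is connected, so such k < #|V| exists) *)
Definition rdist (m n : nat) (x y : 'I_m * 'I_n) : nat :=
  find (fun k => within k x y) (iota 0 #|{: 'I_m * 'I_n}|).

Definition rdist_set (m n : nat) (s : 'I_m * 'I_n) (X : {set 'I_m * 'I_n}) : nat :=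
  \big[minn/#|{: 'I_m * 'I_n}|]_(x in X) rdist s x.

Definition two_resolving (m n : nat) (S : {set 'I_m * 'I_n}) : Prop :=
  forall X Y : {set 'I_m * 'I_n},
    X != set0 -> Y != set0 -> #|X| <= 2 -> #|Y| <= 2 -> X != Y ->
    exists2 s, s \in S & rdist_set s X != rdist_set s Y.

Definition quadruple (m n : nat) (a b : 'I_m) (u v : 'I_n) : {set 'I_m * 'I_n} :=
  [set (a, v); (a, u); (b, v); (b, u)].

From HB Require Import structures.
From mathcomp Require Import all_boot.
Set Implicit Arguments. Unset Strict Implicit. Unset Printing Implicit Defensive.

(** Every vertex [s] outside a quadruple [{av, au, bv, bu}] is at the same
    distance from both of its diagonals [{av, bu}] and [{au, bv}]: if [s]
    lies in row [a] (resp. column [u], ...) it is adjacent to exactly one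
    vertex of each diagonal, and otherwise every vertex of the quadruple is
    at distance 2 from [s]. Since both diagonals are nonempty sets of size at
    most 2, a {2}-resolving set must meet the quadruple to separate them. *)

HB.instance Definition _ := SemiGroup.isComLaw.Build nat minn minnA minnC.

Lemma find_leq_iota d N : d < N -> find (leq d) (iota 0 N) = d.
Proof.
move=> dN; rewrite -(subnKC (ltnW dN)) iotaD find_cat size_iota.
have -> : has (leq d) (iota 0 d) = false.
  by apply/hasPn => k; rewrite mem_iota add0n => /andP[_]; rewrite ltnNge.
by rewrite add0n -(subnSK dN) /= leqnn addn0.
Qed.

Section RookDistance.

Variables m n : nat.
Implicit Types x y z s p q : 'I_m * 'I_n.

Definition rook_dist x y : nat :=
  if x == y then 0 else if (x.1 == y.1) || (x.2 == y.2) then 1 else 2.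

Lemma rook_dist_le2 x y : rook_dist x y <= 2.
Proof. by rewrite /rook_dist; case: ifP => //; case: ifP. Qed.

Lemma rook_adjE x y : rook_adj x y = (rook_dist x y == 1).
Proof. by rewrite /rook_adj /rook_dist; case: eqP => //; case: ifP. Qed.

Lemma rook_dist_adj_le x z y : rook_adj z y -> rook_dist x y <= (rook_dist x z).+1.
Proof.
have [-> | xz] := eqVneq x z; first by rewrite rook_adjE => /eqP ->.
have xz_gt0 : 0 < rook_dist x z by rewrite /rook_dist (negbTE xz); case: ifP.
by move=> _; apply: leq_trans (rook_dist_le2 x y) _.
Qed.

Lemma rook_dist_pred x y :
  0 < rook_dist x y -> exists2 z, rook_adj z y & rook_dist x z = (rook_dist x y).-1.
Proof.
case: x y => [x1 x2] [y1 y2]; rewrite /rook_dist; case: eqVneq => //= xy _.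
case: ifPn => [line | /norP[x1y1 x2y2]].
  by exists (x1, x2); rewrite ?eqxx // /rook_adj xy line.
exists (x1, y2); first by rewrite /rook_adj xpair_eqE (negbTE x1y1) /= eqxx.
by rewrite xpair_eqE eqxx (negbTE x2y2).
Qed.

Lemma withinE k x y : within k x y = (rook_dist x y <= k).
Proof.
elim: k y => [|k IH] y /=.
  by rewrite leqn0 /rook_dist; case: eqP => //; case: ifP.
rewrite IH; apply/idP/idP.
  case/orP => [/leqW // | /existsP[z /andP[]]].
  by rewrite IH => xz /(rook_dist_adj_le x); move/leq_trans; apply.
rewrite leq_eqVlt ltnS => /orP[/eqP dk | ->] //.
have /rook_dist_pred[z zy xz] : 0 < rook_dist x y by rewrite dk.
by apply/orP; right; apply/existsP; exists z; rewrite IH xz dk zy leqnn.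
Qed.

Lemma rook_dist_lt_card x y : rook_dist x y < #|{: 'I_m * 'I_n}|.
Proof.
rewrite /rook_dist; case: (eqVneq x y) => [_ | xy]; first by apply/card_gt0P; exists x.
case: ifPn => [_ | /norP[x1y1 x2y2]]; first by apply/card_gt1P; exists x, y.
have m_gt1 : 1 < m by rewrite -[m]card_ord; apply/card_gt1P; exists x.1, y.1.
have n_gt1 : 1 < n by rewrite -[n]card_ord; apply/card_gt1P; exists x.2, y.2.
by rewrite card_prod !card_ord; apply: leq_trans (leq_mul m_gt1 n_gt1).
Qed.

Lemma rdistE x y : rdist x y = rook_dist x y.
Proof.
rewrite /rdist (eq_find (fun k => withinE k x y)).
exact: find_leq_iota (rook_dist_lt_card x y).
Qed.

Lemma rdist_set2 s p q :
  p != q -> rdist_set s [set p; q] = minn (rook_dist s p) (rook_dist s q).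
Proof.
move=> pq; rewrite /rdist_set (eq_bigl (mem [:: p; q])); last by move=> x; rewrite !inE.
rewrite -big_uniq /=; last by rewrite inE pq.
by rewrite !big_cons big_nil !rdistE (minn_idPl (ltnW (rook_dist_lt_card s q))).
Qed.

Lemma rook_dist_diagonals s a b u v : s \notin quadruple a b u v ->
  minn (rook_dist s (a, v)) (rook_dist s (b, u)) =
  minn (rook_dist s (a, u)) (rook_dist s (b, v)).
Proof.
rewrite /quadruple !inE; case: s => c w; rewrite /rook_dist !xpair_eqE /=.
by case: (c == a); case: (c == b); case: (w == u); case: (w == v).
Qed.

End RookDistance.

Lemma quadruple_diagonals_neq m n (a b : 'I_m) (u v : 'I_n) : a != b -> u != v ->
  [set (a, v); (b, u)] != [set (a, u); (b, v)].
Proof.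
move=> ab uv; apply/negP => /eqP E.
have : (a, v) \in [set (a, u); (b, v)] by rewrite -E !inE eqxx.
by rewrite !inE !xpair_eqE eqxx (negbTE ab) /= eq_sym (negbTE uv).
Qed.

Theorem mainTheorem10 (m n : nat) (S : {set 'I_m * 'I_n}) :
  2 <= m -> 2 <= n -> two_resolving S ->
  forall (a b : 'I_m) (u v : 'I_n), a != b -> u != v ->
    exists2 x, x \in quadruple a b u v & x \in S.
Proof.
(* [2 <= m] and [2 <= n] are implied by [a != b] and [u != v]. *)
move=> _ _ resolving a b u v ab uv.
have av_bu : (a, v) != (b, u) by rewrite xpair_eqE negb_and ab.
have au_bv : (a, u) != (b, v) by rewrite xpair_eqE negb_and ab.
have pair_ne0 (x y : 'I_m * 'I_n) : [set x; y] != set0.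
  by apply/set0Pn; exists x; rewrite !inE eqxx.
have pair_le2 (x y : 'I_m * 'I_n) : #|[set x; y]| <= 2 by rewrite cards2 ltnS leq_b1.
have [s sS] := resolving _ _ (pair_ne0 _ _) (pair_ne0 _ _) (pair_le2 _ _) (pair_le2 _ _)
  (quadruple_diagonals_neq ab uv).
have [sQ _ | sQ] := boolP (s \in quadruple a b u v); first by exists s.
by rewrite !rdist_set2 // rook_dist_diagonals // eqxx.
Qed.
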